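(* If $(X,\asymp,B)$ is a prelength space, then $(\mathfrak{C}(X),\asymp,B')$ is a prelength space.
   Context: $\mathbb{Q}^+$ denotes the strictly positive rationals; all $\varepsilon,\delta$ (with indices) range over $\mathbb{Q}^+$. A metric space is a triple $(X,\asymp,B)$ where $\asymp$ is an equivalence relation on $X$ and $B$ assigns to each $\varepsilon\in\mathbb{Q}^+$ a binary relation $B_\varepsilon$ on $X$ respecting $\asymp$, such that: (1) each $B_\varepsilon$ is reflexive; (2) each $B_\varepsilon$ is symmetric; (3) if $B_{\varepsilon_1}(a,b)$ and $B_{\varepsilon_2}(b,c)$ then $B_{\varepsilon_1+\varepsilon_2}(a,c)$; (4) if $B_{\varepsilon+\delta}(a,b)$ for all $\delta$, then $B_\varepsilon(a,b)$; (5) if $B_\varepsilon(a,b)$ for all $\varepsilon$, then $a\asymp b$. A prelength space is a metric space such that for all $a,b,\varepsilon,\delta_1,\delta_2$ with $\varepsilon<\delta_1+\delta_2$ and $B_\varepsilon(a,b)$ there exists $c$ with $B_{\delta_1}(a,c)$ and $B_{\delta_2}(c,b)$. A regular function over $X$ is a function $x:\mathbb{Q}^+\to X$ such that $B_{\varepsilon_1+\varepsilon_2}(x(\varepsilon_1),x(\varepsilon_2))$ for all $\varepsilon_1,\varepsilon_2$. $\mathfrak{C}(X)$ is the set of regular functions over $X$; on it, $x\asymp y$ means $B_{2\varepsilon}(x(\varepsilon),y(\varepsilon))$ for all $\varepsilon$, and $B'_\varepsilon(x,y)$ means $B_{\varepsilon+\delta_1+\delta_2}(x(\delta_1),y(\delta_2))$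 for all $\delta_1,\delta_2$. *)

From mathcomp Require Import all_boot all_order all_algebra.
Set Implicit Arguments. Unset Strict Implicit. Unset Printing Implicit Defensive.
Import Order.TTheory GRing.Theory Num.Theory.
Local Open Scope ring_scope.

Record Qpos := mkQpos { qval : rat; qval_gt0 : 0 < qval }.

Definition qpadd (a b : Qpos) : Qpos := mkQpos (addr_gt0 (qval_gt0 a) (qval_gt0 b)).

Record is_metric (X : Type) (eqv : X -> X -> Prop) (B : Qpos -> X -> X -> Prop) : Prop := {
  eqv_refl : forall a, eqv a a;
  eqv_sym : forall a b, eqv a b -> eqv b a;
  eqv_trans : forall a b c, eqv a b -> eqv b c -> eqv a c;
  ball_respects : forall e a a' b b', eqv a a' -> eqv b b' -> B e a b -> B e a' b';
  ball_refl : forall e a, B e a a;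
  ball_sym : forall e a b, B e a b -> B e b a;
  ball_triangle : forall e1 e2 a b c, B e1 a b -> B e2 b c -> B (qpadd e1 e2) a c;
  ball_closed : forall e a b, (forall d, B (qpadd e d) a b) -> B e a b;
  ball_sep : forall a b, (forall e, B e a b) -> eqv a b
}.

Definition is_prelength (X : Type) (eqv : X -> X -> Prop) (B : Qpos -> X -> X -> Prop) : Prop :=
  is_metric eqv B /\
  forall (a b : X) (e d1 d2 : Qpos), qval e < qval d1 + qval d2 -> B e a b ->
    exists c, B d1 a c /\ B d2 c b.

Definition regular (X : Type) (B : Qpos -> X -> X -> Prop) (x : Qpos -> X) : Prop :=
  forall e1 e2, B (qpadd e1 e2) (x e1) (x e2).

Definition Compl (X : Type) (B : Qpos -> X -> X -> Prop) : Type :=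
  {x : Qpos -> X | regular B x}.

Definition Compl_eqv (X : Type) (B : Qpos -> X -> X -> Prop) (x y : Compl B) : Prop :=
  forall e, B (qpadd e e) (proj1_sig x e) (proj1_sig y e).

Definition Compl_ball (X : Type) (B : Qpos -> X -> X -> Prop) (e : Qpos) (x y : Compl B) : Prop :=
  forall d1 d2, B (qpadd (qpadd e d1) d2) (proj1_sig x d1) (proj1_sig y d2).

(* The metric axioms of C(X) follow from those of X by passing through approximations with
   arbitrarily small parameters.  For the prelength property, a ball B'_e(x, y) gives the ball
   B_(e+2a)(x(a), y(a)) in X; for a small enough margin a, splitting it in X with radii
   d1 - a and d2 - a yields a point c whose constant regular function is the required midpoint,
   the loss a being recovered by the regularity of x and y. *)
From mathcomp Require Import all_boot all_order all_algebra.
From mathcomp Require Import lra.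
Set Implicit Arguments. Unset Strict Implicit. Unset Printing Implicit Defensive.
Import Order.TTheory GRing.Theory Num.Theory.
Local Open Scope ring_scope.

Lemma qval_inj : injective qval.
Proof. by case=> a ha [b hb] /= eab; subst b; rewrite (bool_irrelevance ha hb). Qed.

Definition qphalf (e : Qpos) : Qpos := mkQpos (divr_gt0 (qval_gt0 e) (ltr0Sn rat 1)).

Definition qpsub (d a : Qpos) (lt_ad : qval a < qval d) : Qpos :=
  mkQpos (eq_ind_r is_true lt_ad (subr_gt0 (qval a) (qval d))).

Lemma small_margin (e d1 d2 : Qpos) : qval e < qval d1 + qval d2 ->
  exists a : Qpos,
    [/\ qval a < qval d1, qval a < qval d2 & qval e + 4 * qval a < qval d1 + qval d2].
Proof.
move=> lt_e; set m := Num.min (Num.min (qval d1) (qval d2)) (qval d1 + qval d2 - qval e).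
have m_gt0 : 0 < m by rewrite !lt_min !qval_gt0 subr_gt0 lt_e.
have := lexx m; rewrite {2}/m !le_min => /andP[/andP[m_d1 m_d2] m_g].
have a_gt0 : 0 < m / 5 by lra.
by exists (mkQpos a_gt0); split => /=; lra.
Qed.

Section Completion.
Variables (X : Type) (eqv : X -> X -> Prop) (B : Qpos -> X -> X -> Prop).
Hypothesis metricB : is_metric eqv B.

Lemma ball_le e e' a b : qval e <= qval e' -> B e a b -> B e' a b.
Proof.
rewrite le_eqVlt => /predU1P[/qval_inj <- // | lt_e Bab].
have d_gt0 : 0 < qval e' - qval e by rewrite subr_gt0.
have -> : e' = qpadd e (mkQpos d_gt0) by apply: qval_inj => /=; lra.
exact: (ball_triangle metricB Bab (ball_refl metricB _ _)).
Qed.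

Lemma regular_ball (x : Compl B) e1 e2 : B (qpadd e1 e2) (sval x e1) (sval x e2).
Proof. exact: (svalP x). Qed.

Lemma compl_ball_le (x y : Compl B) e e' :
  qval e <= qval e' -> Compl_ball e x y -> Compl_ball e' x y.
Proof. by move=> le_e Bxy d1 d2; apply: ball_le (Bxy d1 d2) => /=; lra. Qed.

Lemma compl_eqv_ball (x y : Compl B) e : Compl_eqv x y -> Compl_ball e x y.
Proof.
move=> Exy d1 d2; pose h := qphalf (qphalf e).
have := ball_triangle metricB (ball_triangle metricB (regular_ball x d1 h) (Exy h))
  (regular_ball y h d2).
by apply: ball_le => /=; lra.
Qed.

Lemma compl_ball_eqv (x y : Compl B) : (forall e, Compl_ball e x y) -> Compl_eqv x y.
Proof.
move=> Bxy e; apply: (ball_closed metricB) => d.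
by apply: ball_le (Bxy d e e) => /=; lra.
Qed.

Lemma compl_ball_triangle e1 e2 (x y z : Compl B) :
  Compl_ball e1 x y -> Compl_ball e2 y z -> Compl_ball (qpadd e1 e2) x z.
Proof.
move=> Bxy Byz d1 d2; apply: (ball_closed metricB) => d.
have := ball_triangle metricB (Bxy d1 (qphalf d)) (Byz (qphalf d) d2).
by apply: ball_le => /=; lra.
Qed.

Lemma compl_ball_closed e (x y : Compl B) :
  (forall d, Compl_ball (qpadd e d) x y) -> Compl_ball e x y.
Proof.
move=> Bxy d1 d2; apply: (ball_closed metricB) => d.
by apply: ball_le (Bxy d d1 d2) => /=; lra.
Qed.

Lemma compl_is_metric : is_metric (@Compl_eqv X B) (@Compl_ball X B).
Proof.
split.
- by move=> x e; apply: regular_ball.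
- by move=> x y Exy e; apply: (ball_sym metricB).
- move=> x y z Exy Eyz; apply: compl_ball_eqv => e.
  apply: (@compl_ball_le _ _ (qpadd (qphalf e) (qphalf e))); first by rewrite /=; lra.
  by apply: compl_ball_triangle; apply: compl_eqv_ball.
- move=> e x x' y y' Exx' Eyy' Bxy; apply: compl_ball_closed => d.
  apply: (@compl_ball_le _ _ (qpadd (qpadd (qphalf d) e) (qphalf d))); first by rewrite /=; lra.
  have Ex'x : Compl_eqv x' x by move=> f; apply: (ball_sym metricB).
  exact: compl_ball_triangle (compl_ball_triangle (compl_eqv_ball _ Ex'x) Bxy)
    (compl_eqv_ball _ Eyy').
- move=> e x d1 d2; apply: ball_le (regular_ball x d1 d2) => /=.
  by have := qval_gt0 e; lra.
- move=> e x y Bxy d1 d2; apply: (ball_sym metricB).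
  by apply: ball_le (Bxy d2 d1) => /=; lra.
- exact: compl_ball_triangle.
- exact: compl_ball_closed.
- exact: compl_ball_eqv.
Qed.

Definition compl_unit (c : X) : Compl B :=
  exist (regular B) (fun=> c) (fun e1 e2 => ball_refl metricB (qpadd e1 e2) c).

Lemma compl_ball_unit_r (x : Compl B) c a e :
  B e (sval x a) c -> Compl_ball (qpadd a e) x (compl_unit c).
Proof.
move=> Bxc d1 d2; have := ball_triangle metricB (regular_ball x d1 a) Bxc.
by apply: ball_le => /=; have := qval_gt0 d2; lra.
Qed.

Lemma compl_ball_unit_l (x : Compl B) c a e :
  B e c (sval x a) -> Compl_ball (qpadd e a) (compl_unit c) x.
Proof.
move=> Bcx d1 d2; have := ball_triangle metricB Bcx (regular_ball x a d2).
by apply: ball_le => /=; have := qval_gt0 d1; lra.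
Qed.

End Completion.

Theorem theorem9 (X : Type) (eqv : X -> X -> Prop) (B : Qpos -> X -> X -> Prop) :
  is_prelength eqv B -> is_prelength (@Compl_eqv X B) (@Compl_ball X B).
Proof.
move=> [metricB splitB]; split; first exact: compl_is_metric metricB.
move=> x y e d1 d2 lt_e Bxy.
have [a [lt_a1 lt_a2 lt_e4a]] := small_margin lt_e.
have [c [Bxc Bcy]] :
    exists c, B (qpsub lt_a1) (sval x a) c /\ B (qpsub lt_a2) c (sval y a).
  by apply: splitB (Bxy a a) => /=; lra.
exists (compl_unit metricB c); split.
- by apply: (compl_ball_le metricB) (compl_ball_unit_r metricB Bxc) => /=; lra.
- by apply: (compl_ball_le metricB) (compl_ball_unit_l metricB Bcy) => /=; lra.
Qed.
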